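(* Let $1<S\le N$, $L$ a band-width vector, $\dot W$ an $L$-admissible matrix, $W_\varepsilon=\mathrm{Id}+\varepsilon\dot W$, $k\in\mathbb N$, $\beta\in\Gamma$, $D_\beta=D_{k,\beta,L}$ and $P_{\varepsilon,\beta}=D_\beta W_\varepsilon$. For all sufficiently small $\varepsilon>0$ let $f^{(1)}_\varepsilon,\dots,f^{(N)}_\varepsilon$ be a unit-norm eigenbasis of $P_{\varepsilon,\beta}$. Then for all $1\le\ell\ne m\le N$ and all sufficiently small $\varepsilon>0$, $\langle f^{(\ell)}_\varepsilon,D_\beta\overline{f^{(m)}_\varepsilon}\rangle=0$.
   Context: A band-width vector is $L=(L_1,\dots,L_S)$ of positive integers with $\sum_sL_s=N$; $N_0=0$, $N_s=N_{s-1}+L_s$, $B_s=\{j:N_{s-1}<j\le N_s\}$. $D_{k,\beta,L}$ is the diagonal matrix with $j$-th entry $e^{-2\pi ik\beta_s}$ for $j\in B_s$. $\dot W$ is $L$-admissible if it is real symmetric and (1) $\dot W_{ij}\ge0$ for $i\ne j$, $\sum_j\dot W_{ij}=0$ for all $i$; (2) $\dot W$ has $N$ distinct eigenvalues; (3) each $\hat W_s=(\dot W_{jk})_{j,k\in B_s}$ has $L_s$ distinct eigenvalues. $\Gamma=\{\beta\in\mathbb R^S: e^{-2\pi ik\beta_{s_1}}\neq e^{-2\pi ik\beta_{s_2}}\text{ for all }k\ne0,\ s_1\ne s_2\}$. $\overline v$ is entrywise conjugation and $\langle v,w\rangle=\sum_jv_j\overline{w_j}$. *)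

From HB Require Import structures.
From mathcomp Require Import all_boot all_order all_algebra.
From mathcomp Require Import reals trigo.
From mathcomp Require Import complex.
Set Implicit Arguments. Unset Strict Implicit. Unset Printing Implicit Defensive.
Import Order.TTheory GRing.Theory Num.Theory.
Local Open Scope ring_scope.

Section Defs.
Variable R : realType.
Local Notation C := (complex R).

Definition cexp (x : R) : C := Complex (cos x) (sin x).

Definition bandwidth (N S : nat) (L : 'I_S -> nat) : Prop :=
  (forall s, (0 < L s)%N) /\ (\sum_(s < S) L s)%N = N.

(* N_{s-1} in 0-indexed form: offset of block s *)
Definition boff (S : nat) (L : 'I_S -> nat) (s : 'I_S) : nat :=
  (\sum_(t < S | (t < s)%N) L t)%N.

Definition inblock (S : nat) (L : 'I_S -> nat) (s : 'I_S) (j : nat) : bool :=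
  (boff L s <= j < boff L s + L s)%N.

(* D_{k,beta,L}: diagonal matrix with entry e^{-2 pi i k beta_s} at j in B_s *)
Definition Dmat (N S : nat) (L : 'I_S -> nat) (k : nat) (beta : 'I_S -> R) : 'M[C]_N :=
  \matrix_(i, j) (if i == j then
      \sum_(s < S | inblock L s j) cexp (- (2 * pi * k%:R * beta s))
    else 0).

(* entry of an N x N matrix accessed by natural-number indices (0 outside) *)
Definition natent (N : nat) (W : 'M[R]_N) (i j : nat) : R :=
  oapp (fun a : 'I_N => oapp (fun b : 'I_N => W a b) 0 (insub j)) 0 (insub i).

Definition subblock (N S : nat) (L : 'I_S -> nat) (W : 'M[R]_N) (s : 'I_S)
  : 'M[R]_(L s) :=
  \matrix_(a, b) natent W (boff L s + a) (boff L s + b).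

Definition n_distinct_eigen (n : nat) (M : 'M[R]_n) : Prop :=
  exists e : 'I_n -> R, injective e /\ forall i, eigenvalue M (e i).

Definition admissible (N S : nat) (L : 'I_S -> nat) (W : 'M[R]_N) : Prop :=
  [/\ W^T = W,
      (forall i j, i != j -> 0 <= W i j),
      (forall i, \sum_(j < N) W i j = 0),
      n_distinct_eigen W &
      (forall s, n_distinct_eigen (subblock L W s))].

Definition Gamma (S : nat) (beta : 'I_S -> R) : Prop :=
  forall (k : int), k != 0 -> forall s1 s2 : 'I_S, s1 != s2 ->
    cexp (- (2 * pi * k%:~R * beta s1)) != cexp (- (2 * pi * k%:~R * beta s2)).

Definition cdot (N : nat) (v w : 'cV[C]_N) : C := \sum_(j < N) v j 0 * (w j 0)^*.

Definition cconj (N : nat) (v : 'cV[C]_N) : 'cV[C]_N := map_mx (fun z => z^*) v.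

Definition Weps (N : nat) (W : 'M[R]_N) (eps : R) : 'M[C]_N :=
  map_mx (fun x : R => Complex x 0) (1%:M + eps *: W).

Definition unit_eigenbasis (N : nat) (P : 'M[C]_N) (f : 'I_N -> 'cV[C]_N) : Prop :=
  [/\ (forall i, exists lam : C, P *m f i = lam *: f i),
      (forall i, cdot (f i) (f i) = 1) &
      (\matrix_(j, i) f i j 0) \in unitmx].

End Defs.

(* Write D = D_{k,beta,L} and P = D W_eps. Since D is diagonal and unitary and W_eps
   is real symmetric, the bilinear form B(x, y) = x^T conj(D) y, which equals
   <x, D conj(y)>, satisfies lam B(x, y) = x^T W_eps y = mu B(x, y) for eigenvectors
   P x = lam x and P y = mu y; so B(f_l, f_m) = 0 as soon as the eigenvalues differ.
   If the eigenspaces of P are lines, distinct vectors of an eigenbasis have distinct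
   eigenvalues. To see that they are lines for small eps, look at an eigenvector x at
   an entry p of maximal modulus. Entries outside the band s of p are O(eps), and some
   left eigenvector u_a of the block hat W_s (eigenvalue mu_a) has a coefficient u_a.x
   comparable to x_p; projecting the eigen-equation on u_a gives
   lam = d_s (1 + eps mu_a) + O(eps^2). The phases d_s are distinct (beta in Gamma,
   k <> 0) and so are the mu_a within a band, hence lam determines a. If x, y are
   eigenvectors for lam, then (u_a.y) x - (u_a.x) y has a zero a-coefficient, so it
   cannot be a nonzero eigenvector. *)

From HB Require Import structures.
From mathcomp Require Import all_boot all_order all_algebra.
From mathcomp Require Import reals trigo.
From mathcomp Require Import complex.
From mathcomp Require Import zify lra ring.
Set Implicit Arguments. Unset Strict Implicit. Unset Printing Implicit Defensive.
Import Order.TTheory GRing.Theory Num.Theory Normc.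
Local Open Scope ring_scope.

Lemma ler_sum_term (R : numDomainType) (I : finType) (F : I -> R) (i : I) :
  (forall j, 0 <= F j) -> F i <= \sum_j F j.
Proof. by move=> F_ge0; rewrite (bigD1 i) //= lerDl sumr_ge0. Qed.

Lemma finite_pos_lower_bound (R : realFieldType) (T : finType) (P : pred T) (h : T -> R) :
  (forall t, P t -> 0 < h t) -> exists2 m, 0 < m & forall t, P t -> m <= h t.
Proof.
move=> h_gt0; set S := \sum_(t | P t) (h t)^-1.
have S_ge0 : 0 <= S by apply: sumr_ge0 => t /h_gt0/ltW; rewrite invr_ge0.
exists (1 + S)^-1 => [|t Pt]; first by rewrite invr_gt0; lra.
have ht := h_gt0 t Pt; have : (h t)^-1 <= S.
  rewrite /S (bigD1 t) //= lerDl; apply: sumr_ge0 => i /andP[/h_gt0/ltW + _].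
  by rewrite invr_ge0.
by rewrite -[h t]invrK lef_pV2 ?posrE ?invr_gt0 //; lra.
Qed.

Lemma mxE_addZ (T : pzRingType) m n (A B : 'M[T]_(m, n)) c i j :
  (A + c *: B) i j = A i j + c * B i j.
Proof. by rewrite !mxE. Qed.

Lemma mxE_subZZ (T : pzRingType) m n (A B : 'M[T]_(m, n)) a b i j :
  (a *: A - b *: B) i j = a * A i j - b * B i j.
Proof. by rewrite !mxE. Qed.

Lemma row_diag_mul (F : pzRingType) n p (d : 'rV[F]_n) (A : 'M[F]_(n, p)) a :
  row a (diag_mx d *m A) = d 0 a *: row a A.
Proof. by rewrite row_mul row_diag_mx -scalemxAl -rowE. Qed.

Lemma eigenrows_unitmx (F : fieldType) n (A V : 'M[F]_n) (e : 'I_n -> F) :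
  injective e -> V *m A = diag_mx (\row_a e a) *m V -> (forall a, row a V != 0) ->
  V \in unitmx.
Proof.
move=> e_inj VA V_neq0; rewrite -row_free_unit; apply: inj_row_free => z zV.
have eig a : (row a V <= eigenspace A (e a))%MS.
  by apply/eigenspaceP; rewrite -row_mul VA row_diag_mul mxE.
have dx : mxdirect (\sum_(a | predT a) eigenspace A (e a)).
  by apply: mxdirect_sum_eigenspace => a b _ _ /e_inj.
have [A_ _ _ A_uniq] := @sub_dsumsmx F 'I_n predT 1 n 0 _ dx (sub0mx _ _).
have zrow a : z 0 a *: row a V = A_ a.
  apply: (A_uniq (fun a => z 0 a *: row a V)) => [b _||//]; first exact: scalemx_sub.
  by rewrite -{1}zV mulmx_sum_row; apply: eq_bigl.
have zero a : 0 = A_ a.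
  by apply: (A_uniq (fun=> 0)) => [b _||//]; rewrite ?sub0mx ?big1.
apply/rowP => a; apply/eqP; move: (zrow a); rewrite -zero => /eqP.
by rewrite scaler_eq0 (negbTE (V_neq0 a)) orbF mxE.
Qed.

Lemma distinct_eigen_rows (R : realType) n (M : 'M[R]_n) : n_distinct_eigen M ->
  exists (V : 'M[R]_n) (e : 'I_n -> R),
    [/\ V \in unitmx, injective e & V *m M = diag_mx (\row_a e a) *m V].
Proof.
case=> e [e_inj e_eig].
have /fin_all_exists [v v_eig] : forall a, exists v : 'rV_n, v *m M = e a *: v /\ v != 0.
  by move=> a; have /eigenvalueP [v ? ?] := e_eig a; exists v.
pose V : 'M[R]_n := \matrix_(a, j) v a 0 j; have rowV a : row a V = v a.
  by apply/rowP => j; rewrite !mxE.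
have VM : V *m M = diag_mx (\row_a e a) *m V.
  by apply/row_matrixP => a; rewrite row_mul row_diag_mul rowV (proj1 (v_eig a)) mxE.
exists V, e; split => //; apply: eigenrows_unitmx e_inj VM _ => a.
by rewrite rowV (proj2 (v_eig a)).
Qed.

Lemma unitmx_pair_free (F : fieldType) n (A : 'M[F]_n) (l m : 'I_n) (a b : F) :
  A \in unitmx -> l != m -> a *: col l A + b *: col m A = 0 -> a = 0 /\ b = 0.
Proof.
move=> A_unit lm comb0; pose z : 'cV[F]_n := a *: delta_mx l 0 + b *: delta_mx m 0.
have Az : A *m z = 0 by rewrite mulmxDr -!scalemxAr -!colE.
have z0 : z = 0 by rewrite -(mulKmx A_unit z) Az mulmx0.
have := congr1 (fun v : 'cV_n => (v l 0, v m 0)) z0.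
by rewrite !mxE !eqxx (negbTE lm) eq_sym (negbTE lm) !mulr1 !mulr0 addr0 add0r => -[].
Qed.

Lemma eigenbasis_eigval_inj (F : fieldType) n (P : 'M[F]_n) (f : 'I_n -> 'cV[F]_n)
    (lam : 'I_n -> F) :
  (\matrix_(j, i) f i j 0) \in unitmx -> (forall i, P *m f i = lam i *: f i) ->
  (forall a (x y : 'cV[F]_n), P *m x = a *: x -> P *m y = a *: y -> x != 0 ->
     exists c, y = c *: x) ->
  injective lam.
Proof.
move=> F_unit f_eig lines l m lam_lm; apply/eqP/negPn/negP => lm.
have colF i : col i (\matrix_(j, i) f i j 0) = f i by apply/colP => j; rewrite !mxE.
have fl_neq0 : f l != 0.
  apply/eqP => fl0; suff [/eqP] : (1 : F) = 0 /\ (0 : F) = 0 by rewrite oner_eq0.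
  by apply: unitmx_pair_free F_unit lm _; rewrite !colF fl0 scaler0 scale0r addr0.
have fm_eig : P *m f m = lam l *: f m by rewrite f_eig lam_lm.
have [c fm] := lines _ _ _ (f_eig l) fm_eig fl_neq0.
suff [_ /eqP] : c = 0 /\ (-1 : F) = 0 by rewrite oppr_eq0 oner_eq0.
by apply: unitmx_pair_free F_unit lm _; rewrite !colF fm scaleN1r subrr.
Qed.

Section ComplexModulus.
Variable R : rcfType.
Implicit Types (x y : R[i]).

Lemma normc_ge0 x : 0 <= normc x.
Proof. by case: x => a b; rewrite /= sqrtr_ge0. Qed.

Lemma normc_eq0 x : (normc x == 0) = (x == 0).
Proof. by apply/eqP/eqP => [/eq0_normc //|->]; exact: normc0. Qed.

Lemma normc_gt0 x : (0 < normc x) = (x != 0).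
Proof. by rewrite lt_def normc_ge0 andbT normc_eq0. Qed.

Lemma normcB x y : normc (x - y) <= normc x + normc y.
Proof. by rewrite -(normcN y) le_normcD. Qed.

Lemma normc_real (r : R) : normc (r%:C)%C = `|r|.
Proof. by rewrite /= expr0n /= addr0 sqrtr_sqr. Qed.

Lemma ler_normc_sum (I : Type) (s : seq I) (P : pred I) (F : I -> R[i]) :
  normc (\sum_(i <- s | P i) F i) <= \sum_(i <- s | P i) normc (F i).
Proof.
elim/big_ind2: _ => [|a b c d ha hc|//]; first by rewrite normc0.
exact: le_trans (le_normcD _ _) (lerD ha hc).
Qed.

Definition mxnormc m n (A : 'M[R[i]]_(m, n)) : R := \sum_i \sum_j normc (A i j).

Lemma mxnormc_ge0 m n (A : 'M[R[i]]_(m, n)) : 0 <= mxnormc A.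
Proof. by apply: sumr_ge0 => i _; apply: sumr_ge0 => j _; apply: normc_ge0. Qed.

Lemma normc_mulmx_le m n (A : 'M[R[i]]_(m, n)) (x : 'cV[R[i]]_n) (M : R) i :
  0 <= M -> (forall j, normc (x j 0) <= M) -> normc ((A *m x) i 0) <= mxnormc A * M.
Proof.
move=> M_ge0 xM; rewrite mxE; apply: le_trans (ler_normc_sum _ _ _) _.
apply: le_trans (_ : \sum_j normc (A i j) * M <= _).
  by apply: ler_sum => j _; rewrite normcM ler_wpM2l ?normc_ge0.
rewrite -mulr_suml ler_wpM2r // (ler_sum_term (F := fun k => \sum_j normc (A k j))) //.
by move=> k; apply: sumr_ge0 => j _; apply: normc_ge0.
Qed.

Lemma exists_max_entry n (x : 'cV[R[i]]_n) : x != 0 ->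
  exists p, x p 0 != 0 /\ forall j, normc (x j 0) <= normc (x p 0).
Proof.
move=> x_neq0; have [i0 xi0] : exists i, x i 0 != 0.
  apply/existsP; apply: contraNT x_neq0 => /existsPn x0.
  by apply/eqP/matrixP => i j; rewrite ord1 mxE; apply/eqP/negbNE/x0.
have [p _ p_max] := @arg_maxP _ _ _ i0 xpredT (fun i => normc (x i 0)) isT.
exists p; split => [|j]; last exact: p_max.
by rewrite -normc_gt0 (lt_le_trans _ (p_max i0 isT)) ?normc_gt0.
Qed.

End ComplexModulus.

Lemma unitmx_coercive (R : rcfType) n (U : 'M[R[i]]_n) : U \in unitmx ->
  exists2 Cc : R, 0 < Cc &
    forall (v : 'cV[R[i]]_n) j, exists b, normc (v j 0) <= Cc * normc ((U *m v) b 0).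
Proof.
move=> U_unit; have := mxnormc_ge0 (invmx U) => K_ge0.
exists (mxnormc (invmx U) + 1) => [|v j]; first lra.
have [b _ b_max] := @arg_maxP _ _ _ j xpredT (fun b => normc ((U *m v) b 0)) isT.
exists b; rewrite -{1}(mulKmx U_unit v).
apply: le_trans (normc_mulmx_le _ _ (normc_ge0 _) (fun c => b_max c isT)) _.
by rewrite ler_wpM2r ?normc_ge0 // lerDl.
Qed.

Definition eigenspaces_are_lines (R : rcfType) N (P : R -> 'M[R[i]]_N) :=
  exists2 eps0 : R, 0 < eps0 & forall eps, 0 < eps < eps0 ->
    forall (lam : R[i]) (x y : 'cV[R[i]]_N),
    P eps *m x = lam *: x -> P eps *m y = lam *: y -> x != 0 -> exists c, y = c *: x.

Section SimpleEigenvalues.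
Variables (R : rcfType) (N : nat) (B : eqType) (blk : 'I_N -> B).
Local Notation C := R[i].
Variables (d : 'I_N -> C) (W u : 'M[C]_N) (mu : 'I_N -> C) (Cc : R).
(* The rows of [u] are, band by band, left eigenvectors of the diagonal blocks of [W];
   [u_coercive] is the quantitative form of their invertibility on each band. *)
Hypothesis d_unit : forall i, normc (d i) = 1.
Hypothesis d_blk : forall i j, blk i = blk j -> d i = d j.
Hypothesis d_sep : forall i j, blk i != blk j -> d i != d j.
Hypothesis u_supp : forall a i, blk a != blk i -> u a i = 0.
Hypothesis u_eigen : forall a j, blk j = blk a -> (u *m W) a j = mu a * u a j.
Hypothesis mu_sep : forall a b, blk a = blk b -> a != b -> mu a != mu b.
Hypothesis Cc_gt0 : 0 < Cc.
Hypothesis u_coercive : forall (v : 'cV[C]_N) j,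
  exists2 a, blk a = blk j & normc (v j 0) <= Cc * normc ((u *m v) a 0).

Definition Peps (eps : R) : 'M[C]_N := diag_mx (\row_i d i) *m (1%:M + (eps%:C)%C *: W).

Local Notation Kw := (mxnormc W).

Lemma Kw_ge0 : 0 <= Kw. Proof. exact: mxnormc_ge0. Qed.

Lemma Peps_eigen_coord eps (lam : C) (x : 'cV[C]_N) : Peps eps *m x = lam *: x ->
  forall i, (lam - d i) * x i 0 = d i * (eps%:C)%C * (W *m x) i 0.
Proof.
move=> Px i; have := congr1 (fun v : 'cV_N => v i 0) Px.
have diagE (v : 'cV[C]_N) : (diag_mx (\row_i d i) *m v) i 0 = d i * v i 0.
  by rewrite mul_diag_mx !mxE.
rewrite -mulmxA mulmxDl mul1mx -scalemxAl diagE mxE_addZ [(lam *: x) i 0]mxE mulrBl.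
by move=> <-; ring.
Qed.

Lemma coef_diag_mx a (y : 'cV[C]_N) :
  (u *m (diag_mx (\row_i d i) *m y)) a 0 = d a * (u *m y) a 0.
Proof.
rewrite mulmxA !mxE mulr_sumr; apply: eq_bigr => i _; rewrite mul_mx_diag !mxE.
have [/d_blk->|ai] := eqVneq (blk a) (blk i); first by rewrite mulrCA mulrA.
by rewrite u_supp // !(mul0r, mulr0).
Qed.

Definition offblock a (x : 'cV[C]_N) : 'cV[C]_N :=
  \col_j (if blk j == blk a then 0 else x j 0).

Lemma offblockE a x j : offblock a x j 0 = if blk j == blk a then 0 else x j 0.
Proof. by rewrite mxE. Qed.

Lemma coef_eigen_identity eps (lam : C) (x : 'cV[C]_N) a : Peps eps *m x = lam *: x ->
  (lam - d a - (eps%:C)%C * d a * mu a) * (u *m x) a 0 =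
  d a * (eps%:C)%C * (u *m W *m offblock a x) a 0.
Proof.
move=> Px; set e := (eps%:C)%C.
have lam_coef : lam * (u *m x) a 0 = d a * ((u *m x) a 0 + e * (u *m W *m x) a 0).
  transitivity ((u *m (lam *: x)) a 0); first by rewrite -scalemxAr [RHS]mxE.
  rewrite -Px /Peps -mulmxA coef_diag_mx mulmxDl mul1mx -scalemxAl mulmxDr -scalemxAr.
  by rewrite mxE_addZ mulmxA.
have split_coef : (u *m W *m x) a 0 = mu a * (u *m x) a 0 + (u *m W *m offblock a x) a 0.
  rewrite [LHS]mxE [(u *m x) a 0]mxE [(u *m W *m _) a 0]mxE mulr_sumr -big_split.
  apply: eq_bigr => j _ /=; rewrite offblockE.
  have [ja|ja] := eqVneq (blk j) (blk a).
    by rewrite u_eigen // mulr0 addr0 mulrA.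
  by rewrite u_supp 1?eq_sym // mul0r mulr0 add0r.
by rewrite !mulrBl lam_coef split_coef; ring.
Qed.

Section Small.
Variables (delta gamma eps : R).
Hypothesis delta_gt0 : 0 < delta.
Hypothesis d_gap : forall i j, blk i != blk j -> delta <= normc (d i - d j).
Hypothesis mu_gap : forall a b, blk a = blk b -> a != b -> gamma <= normc (mu a - mu b).
Hypothesis eps_gt0 : 0 < eps.
Hypothesis eps_small_d : 2 * eps * Kw < delta.

Definition Koff := 2 * Kw / delta.
Definition Kerr := mxnormc (u *m W) * Koff * Cc.

Hypothesis eps_small_g : 2 * eps * Kerr < gamma.

Lemma Koff_ge0 : 0 <= Koff.
Proof. exact: divr_ge0 (mulr_ge0 (ler0n _ 2) Kw_ge0) (ltW delta_gt0). Qed.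

Lemma Kerr_ge0 : 0 <= Kerr.
Proof. exact: mulr_ge0 (mulr_ge0 (mxnormc_ge0 _) Koff_ge0) (ltW Cc_gt0). Qed.

Definition eigval_near a (lam : C) := normc (lam - d a) <= eps * Kw /\
  normc (lam - d a - (eps%:C)%C * d a * mu a) <= eps * eps * Kerr.

Section Localization.
Variables (lam : C) (x : 'cV[C]_N) (p : 'I_N).
Hypothesis x_eigen : Peps eps *m x = lam *: x.
Hypothesis xp_neq0 : x p 0 != 0.
Hypothesis xp_max : forall j, normc (x j 0) <= normc (x p 0).

Lemma eigval_gap_entry_le i : normc (lam - d i) * normc (x i 0) <= eps * Kw * normc (x p 0).
Proof.
rewrite -normcM (Peps_eigen_coord x_eigen) !normcM d_unit normc_real gtr0_norm // mul1r.
by rewrite -mulrA ler_wpM2l ?(ltW eps_gt0) // normc_mulmx_le ?normc_ge0.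
Qed.

Lemma eigval_near_max : normc (lam - d p) <= eps * Kw.
Proof. by have := eigval_gap_entry_le p; rewrite ler_pM2r ?normc_gt0. Qed.

Lemma offblock_small i : blk i != blk p -> normc (x i 0) <= eps * Koff * normc (x p 0).
Proof.
move=> ip; have half_gap : delta / 2 <= normc (lam - d i).
  have := d_gap ip; have := eigval_near_max; have := eps_small_d.
  have := normcB (lam - d p) (lam - d i).
  have -> : lam - d p - (lam - d i) = d i - d p by ring.
  lra.
have half_gt0 : 0 < delta / 2 by rewrite divr_gt0.
rewrite -(ler_pM2l half_gt0).
have -> : delta / 2 * (eps * Koff * normc (x p 0)) = eps * Kw * normc (x p 0).
  by rewrite /Koff; field; exact: lt0r_neq0.
exact: le_trans (ler_wpM2r (normc_ge0 _) half_gap) (eigval_gap_entry_le i).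
Qed.

Lemma localize_at_max : exists a, [/\ blk a = blk p, eigval_near a lam & (u *m x) a 0 != 0].
Proof.
have [a ap xp_le] := u_coercive x p.
have coef_gt0 : 0 < normc ((u *m x) a 0).
  by rewrite -(pmulr_rgt0 _ Cc_gt0) (lt_le_trans _ xp_le) ?normc_gt0.
exists a; split; rewrite -?normc_gt0 //; split; first by rewrite (d_blk ap) eigval_near_max.
have bound_ge0 : 0 <= eps * Koff * normc (x p 0).
  exact: mulr_ge0 (mulr_ge0 (ltW eps_gt0) Koff_ge0) (normc_ge0 _).
have off_le j : normc (offblock a x j 0) <= eps * Koff * normc (x p 0).
  rewrite offblockE; case: eqP => [_|/eqP ja]; first by rewrite normc0.
  by rewrite offblock_small // -ap.
rewrite -(ler_pM2r coef_gt0) -normcM coef_eigen_identity //.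
rewrite !normcM d_unit normc_real gtr0_norm // mul1r.
apply: le_trans (_ : eps * (mxnormc (u *m W) * (eps * Koff * normc (x p 0))) <= _).
  by rewrite ler_wpM2l ?(ltW eps_gt0) // normc_mulmx_le.
have -> : eps * eps * Kerr * normc ((u *m x) a 0) =
    eps * eps * (mxnormc (u *m W) * Koff) * (Cc * normc ((u *m x) a 0)).
  by rewrite /Kerr; ring.
have -> : eps * (mxnormc (u *m W) * (eps * Koff * normc (x p 0))) =
    eps * eps * (mxnormc (u *m W) * Koff) * normc (x p 0) by ring.
rewrite ler_wpM2l //.
exact: mulr_ge0 (mulr_ge0 (ltW eps_gt0) (ltW eps_gt0)) (mulr_ge0 (mxnormc_ge0 _) Koff_ge0).
Qed.

End Localization.

Lemma localize (lam : C) (x : 'cV[C]_N) : Peps eps *m x = lam *: x -> x != 0 ->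
  exists2 a, eigval_near a lam & (u *m x) a 0 != 0.
Proof.
move=> Px /exists_max_entry [p [xp0 p_max]].
by have [a [_ ? ?]] := localize_at_max Px xp0 p_max; exists a.
Qed.

Lemma eigval_near_unique a b (lam : C) : eigval_near a lam -> eigval_near b lam -> a = b.
Proof.
move=> [a1 a2] [b1 b2].
have ab_blk : blk a = blk b.
  apply/eqP; apply: contraTT eps_small_d => /d_gap ab; rewrite -leNgt.
  have := normcB (lam - d b) (lam - d a).
  have -> : lam - d b - (lam - d a) = d a - d b by ring.
  lra.
apply/eqP; apply: contraTT eps_small_g => /(mu_gap ab_blk) mu_ab; rewrite -leNgt.
rewrite (d_blk ab_blk) in a2.
have := normcB (lam - d b - (eps%:C)%C * d b * mu b) (lam - d b - (eps%:C)%C * d b * mu a).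
have -> : lam - d b - (eps%:C)%C * d b * mu b - (lam - d b - (eps%:C)%C * d b * mu a) =
  (eps%:C)%C * d b * (mu a - mu b) by ring.
rewrite !normcM d_unit normc_real gtr0_norm // mulr1 => le_mu.
have : eps * gamma <= eps * (2 * eps * Kerr).
  apply: le_trans (_ : eps * normc (mu a - mu b) <= _); last lra.
  by rewrite ler_wpM2l ?(ltW eps_gt0).
by rewrite ler_pM2l.
Qed.

Lemma eigenspace_line (lam : C) (x y : 'cV[C]_N) :
  Peps eps *m x = lam *: x -> Peps eps *m y = lam *: y -> x != 0 -> exists c, y = c *: x.
Proof.
move=> Px Py x_neq0; have [a a_near xa_neq0] := localize Px x_neq0.
(* z is an eigenvector with a zero a-coefficient, so it cannot localize anywhere. *)
pose z := (u *m y) a 0 *: x - (u *m x) a 0 *: y.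
have Pz : Peps eps *m z = lam *: z.
  rewrite /z mulmxBr -!scalemxAr Px Py scalerBr !scalerA.
  by congr (_ *: _ - _ *: _); rewrite mulrC.
have za : (u *m z) a 0 = 0.
  by rewrite /z mulmxBr -!scalemxAr mxE_subZZ mulrC subrr.
have z0 : z = 0.
  apply/eqP; apply: contraT => z_neq0; have [b b_near zb] := localize Pz z_neq0.
  by rewrite (eigval_near_unique b_near a_near) za eqxx in zb.
exists ((u *m y) a 0 / (u *m x) a 0); move/eqP: z0; rewrite subr_eq0 => /eqP zE.
by rewrite -{1}[y](scalerK xa_neq0) -zE scalerA mulrC.
Qed.

End Small.

Lemma Peps_lines : eigenspaces_are_lines Peps.
Proof.
have [delta delta_gt0 delta_le] : exists2 delta : R, 0 < delta &
    forall t : 'I_N * 'I_N, blk t.1 != blk t.2 -> delta <= normc (d t.1 - d t.2).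
  by apply: finite_pos_lower_bound => t /d_sep; rewrite normc_gt0 subr_eq0.
have [gamma gamma_gt0 gamma_le] : exists2 gamma : R, 0 < gamma &
    forall t : 'I_N * 'I_N, (blk t.1 == blk t.2) && (t.1 != t.2) ->
    gamma <= normc (mu t.1 - mu t.2).
  apply: finite_pos_lower_bound => t /andP[/eqP t_blk t_neq].
  by rewrite normc_gt0 subr_eq0 mu_sep.
have := Kerr_ge0 delta_gt0; set K := Kerr delta => K_ge0.
have Kw1_gt0 : 0 < 2 * Kw + 1 by have := Kw_ge0; lra.
have K1_gt0 : 0 < 2 * K + 1 by lra.
exists (Num.min (delta / (2 * Kw + 1)) (gamma / (2 * K + 1))).
  by rewrite lt_min !divr_gt0.
move=> eps /andP[eps_gt0]; rewrite lt_min !ltr_pdivlMr // => /andP[small_d small_g].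
apply: (eigenspace_line delta_gt0 (gamma := gamma)) => //.
- by move=> i j ij; exact: (delta_le (i, j)).
- by move=> a b ab a_neq_b; apply: (gamma_le (a, b)); rewrite /= ab eqxx.
- by nra.
- by rewrite -/K; nra.
Qed.

End SimpleEigenvalues.

Section Bands.
Variables (N S : nat) (L : 'I_S -> nat).
Hypothesis hL : bandwidth N L.

Lemma boff_add_le (s : 'I_S) (P : pred 'I_S) :
  (forall t : 'I_S, (t < s)%N -> P t) -> P s -> (boff L s + L s <= \sum_(t | P t) L t)%N.
Proof.
move=> sub_P Ps; rewrite (bigID (fun t : 'I_S => (t < s)%N)) /= leq_add //.
  by apply/eq_leq/eq_bigl => t; rewrite andb_idl //; exact: sub_P.
by rewrite (bigD1 s) ?ltnn ?Ps //= leq_addr.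
Qed.

Lemma band_le_N (s : 'I_S) : (boff L s + L s <= N)%N.
Proof. by case: hL => _ <-; exact: boff_add_le. Qed.

Lemma inblock_uniq (s s' : 'I_S) j : inblock L s j -> inblock L s' j -> s = s'.
Proof.
have before (t t' : 'I_S) : (t < t')%N -> (boff L t + L t <= boff L t')%N.
  by move=> tt'; apply: boff_add_le => // r rt; exact: ltn_trans rt tt'.
rewrite /inblock => /andP[? ?] /andP[? ?].
by case: (ltngtP s s') => [/before|/before|/val_inj //]; lia.
Qed.

Lemma inblock_exists j : (j < N)%N -> exists s : 'I_S, inblock L s j.
Proof.
suff cover m : (m <= S)%N -> (j < \sum_(t : 'I_S | (t < m)%N) L t)%N ->
    exists s : 'I_S, inblock L s j.
  move=> jN; apply: (cover S) => //.
  suff -> : (\sum_(t : 'I_S | (t < S)%N) L t = N)%N by [].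
  by case: hL => _ <-; apply: eq_bigl => t; rewrite ltn_ord.
elim: m => [|m IHm] mS; first by rewrite big_pred0.
have sum_split :
    (\sum_(t : 'I_S | (t < m.+1)%N) L t = L (Ordinal mS) + boff L (Ordinal mS))%N.
  rewrite (bigD1 (Ordinal mS)) //=; congr (_ + _); apply: eq_bigl => t.
  by rewrite ltnS -val_eqE /= andbC -ltn_neqAle.
rewrite sum_split => j_lt; have [j_lt'|j_ge] := ltnP j (boff L (Ordinal mS)).
  exact: IHm (ltnW mS) j_lt'.
by exists (Ordinal mS); rewrite /inblock j_ge addnC.
Qed.

Lemma block_index :
  exists bl : 'I_N -> 'I_S, forall s (i : 'I_N), inblock L s i = (s == bl i).
Proof.
have /fin_all_exists [bl blP] := fun i : 'I_N => inblock_exists (ltn_ord i).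
exists bl => s i; apply/idP/eqP => [/inblock_uniq/(_ (blP i)) // | ->]; exact: blP.
Qed.

Section Band.
Variable s : 'I_S.
Local Notation n := (L s).
Local Notation inb := (inblock L s).

Fact band_emb_subproof (c : 'I_n) : (boff L s + c < N)%N.
Proof. by apply: leq_trans (band_le_N s); rewrite ltn_add2l. Qed.

Definition band_emb (c : 'I_n) : 'I_N := Ordinal (band_emb_subproof c).

Lemma inblock_emb c : inb (band_emb c).
Proof. by rewrite /inblock /= leq_addr ltn_add2l ltn_ord. Qed.

Lemma inblockP (i : 'I_N) : inb i -> exists c, i = band_emb c.
Proof.
rewrite /inblock => /andP[lo hi].
have c_lt : (i - boff L s < n)%N by lia.
by exists (Ordinal c_lt); apply: val_inj; rewrite /= subnKC.
Qed.

Lemma sum_band (V : nmodType) (F : 'I_N -> V) :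
  (forall i : 'I_N, ~~ inb i -> F i = 0) -> \sum_i F i = \sum_c F (band_emb c).
Proof.
move=> F0; rewrite (bigID (fun i : 'I_N => inb i)) /=.
rewrite [X in _ + X]big1 ?addr0 => [|i /F0 //].
rewrite (reindex_omap band_emb (fun i => insub (i - boff L s)%N)) => [|i /inblockP [c ->]].
  by apply: eq_bigl => c; rewrite inblock_emb /= addKn valK eqxx.
by rewrite /= addKn valK.
Qed.

End Band.
End Bands.

Lemma natentE (R : realType) n (M : 'M[R]_n) (i j : 'I_n) : natent M i j = M i j.
Proof. by rewrite /natent !valK. Qed.

Section BandEigenData.
Variables (R : realType) (N S : nat) (L : 'I_S -> nat).
Hypothesis hL : bandwidth N L.
Variables (W : 'M[R]_N) (s : 'I_S).
Local Notation n := (L s).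
Local Notation inb := (inblock L s).
Local Notation emb := (@band_emb N S L hL s).

Definition band_pad (U : 'M[R]_n) : 'M[R]_N :=
  \matrix_(i, j) if inb i && inb j then natent U (i - boff L s) (j - boff L s) else 0.

Definition band_padv (e : 'I_n -> R) (i : 'I_N) : R := oapp e 0 (insub (i - boff L s)%N).

Lemma band_padE U c c' : band_pad U (emb c) (emb c') = U c c'.
Proof. by rewrite mxE !inblock_emb /= !addKn natentE. Qed.

Lemma band_pad0 U (i j : 'I_N) : ~~ inb j -> band_pad U i j = 0.
Proof. by move=> j_out; rewrite mxE (negbTE j_out) andbF. Qed.

Lemma band_padvE e c : band_padv e (emb c) = e c.
Proof. by rewrite /band_padv /= addKn valK. Qed.

Lemma subblockE c c' : subblock L W s c c' = W (emb c) (emb c').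
Proof. by rewrite mxE -natentE. Qed.

Lemma band_eigen_data : n_distinct_eigen (subblock L W s) ->
  exists (U : 'M[R]_N) (e : 'I_N -> R) (Cs : R), [/\
    forall a i : 'I_N, ~~ inb i -> U a i = 0,
    forall a j : 'I_N, inb a -> inb j -> (U *m W) a j = e a * U a j,
    forall a b : 'I_N, inb a -> inb b -> a != b -> e a != e b &
    forall (v : 'cV[R[i]]_N) (j : 'I_N), inb j -> exists2 a : 'I_N, inb a &
      normc (v j 0) <= Cs * normc ((map_mx (real_complex R) U *m v) a 0)].
Proof.
move=> /distinct_eigen_rows [V [e [V_unit e_inj VM]]].
have [|Cs _ V_coer] := @unitmx_coercive R _ (map_mx (real_complex R) V).
  by rewrite map_unitmx.
exists (band_pad V), (band_padv e), Cs; split => [a i|a j|a b|v j].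
- exact: band_pad0.
- move=> /inblockP [ca ->] /inblockP [cj ->].
  rewrite mxE (sum_band hL (s := s)) => [|i i_out]; last by rewrite band_pad0 ?mul0r.
  rewrite band_padvE band_padE; transitivity ((V *m subblock L W s) ca cj).
    by rewrite mxE; apply: eq_bigr => c _; rewrite band_padE subblockE.
  by rewrite VM mul_diag_mx !mxE.
- move=> /inblockP [ca ->] /inblockP [cb ->] ab.
  by rewrite !band_padvE (inj_eq e_inj); apply: contraNneq ab => ->.
- move=> /inblockP [cj ->]; pose w : 'cV_n := \col_c v (emb c) 0.
  have [b le_b] := V_coer w cj; exists (emb b); first exact: inblock_emb.
  suff <- : (map_mx (real_complex R) V *m w) b 0 =
      (map_mx (real_complex R) (band_pad V) *m v) (emb b) 0 by rewrite mxE in le_b.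
  rewrite [LHS]mxE [RHS]mxE (sum_band hL (s := s)) => [|i i_out].
    apply: eq_bigr => c _.
    by rewrite [w _ _]mxE [map_mx _ V _ _]mxE [map_mx _ (band_pad V) _ _]mxE band_padE.
  by rewrite mxE band_pad0 // rmorph0 mul0r.
Qed.

End BandEigenData.

Section Assembly.
Variables (R : realType) (N : nat) (Wd : 'M[R]_N).
Local Notation C := R[i].
Local Notation Wc := (map_mx (real_complex R) Wd).

Lemma Peps_lines_const (d : 'I_N -> C) :
  (forall i j, d i = d j) -> (forall i, normc (d i) = 1) -> n_distinct_eigen Wd ->
  eigenspaces_are_lines (Peps d Wc).
Proof.
move=> d_const d_unit /distinct_eigen_rows [V [e [V_unit e_inj VM]]].
have [|Cc Cc_gt0 V_coer] := @unitmx_coercive R _ (map_mx (real_complex R) V).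
  by rewrite map_unitmx.
apply: (Peps_lines (blk := fun=> tt) (u := map_mx (real_complex R) V)
  (mu := fun a => (e a)%:C%C) (Cc := Cc)) => // [a j _|a b _ ab|v j].
- by rewrite -map_mxM VM mul_diag_mx !mxE rmorphM.
- by apply: contraNneq ab => /complexI /e_inj ->.
- by have [b ?] := V_coer v j; exists b.
Qed.

Lemma Peps_lines_band S (L : 'I_S -> nat) (bl : 'I_N -> 'I_S) (dv : 'I_S -> C) :
  bandwidth N L -> (forall s (i : 'I_N), inblock L s i = (s == bl i)) ->
  (forall s, normc (dv s) = 1) -> injective dv ->
  (forall s, n_distinct_eigen (subblock L Wd s)) ->
  eigenspaces_are_lines (Peps (fun i => dv (bl i)) Wc).
Proof.
move=> hL blP dv_unit dv_inj Wsub.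
have /fin_all_exists [U /fin_all_exists [e /fin_all_exists [Cs data]]] :=
  fun s => band_eigen_data hL (Wsub s).
have bl_in (a : 'I_N) : inblock L (bl a) a by rewrite blP.
pose Cc := 1 + \sum_s `|Cs s|.
have Cs_le s : Cs s <= Cc.
  apply: le_trans (ler_norm _) (ler_wpDl ler01 _).
  exact: (ler_sum_term (F := fun s => `|Cs s|)).
pose Ub : 'M[R]_N := \matrix_(a, i) U (bl a) a i.
have UbE a v : (map_mx (real_complex R) Ub *m v) a 0 =
    (map_mx (real_complex R) (U (bl a)) *m v) a 0.
  by rewrite !mxE; apply: eq_bigr => i _; rewrite !mxE.
apply: (Peps_lines (blk := bl) (u := map_mx (real_complex R) Ub)
  (mu := fun a => (e (bl a) a)%:C%C) (Cc := Cc))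
  => // [i j|i j|a i ai|a j ja|a b ab a_b||v j].
- by move=> ->.
- by rewrite (inj_eq dv_inj).
- have [supp _ _ _] := data (bl a).
  by rewrite !mxE supp ?blP // rmorph0.
- have [_ eig _ _] := data (bl a).
  rewrite -map_mxM !mxE -rmorphM; congr (_%:C)%C.
  by rewrite -eig ?blP ?ja // mxE; apply: eq_bigr => i _; rewrite mxE.
- have [_ _ sep _] := data (bl a).
  have b_in : inblock L (bl a) b by rewrite blP ab.
  by rewrite -ab; apply: contra (sep a b (bl_in a) b_in a_b) => /eqP/complexI/eqP.
- by rewrite /Cc ltr_pwDl ?sumr_ge0.
- have [_ _ _ coer] := data (bl j).
  have [a a_in le_a] := coer v j (bl_in j).
  have bl_a : bl a = bl j by apply/esym/eqP; rewrite -blP.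
  exists a => //; rewrite UbE bl_a; apply: le_trans le_a _.
  by rewrite ler_wpM2r ?normc_ge0.
Qed.

End Assembly.

Section Conjugate.
Variables (R : realType) (N : nat).
Local Notation C := R[i].

Lemma cdot_conj_mulmx (D : 'M[C]_N) (x y : 'cV[C]_N) :
  cdot x (D *m cconj y) = (x^T *m map_mx Num.conj D *m y) 0 0.
Proof.
have conjK : cconj (D *m cconj y) = map_mx Num.conj D *m y.
  rewrite /cconj map_mxM; congr (_ *m _).
  by apply/matrixP => i j; rewrite !mxE /= conjCK.
have cdotE (v w : 'cV[C]_N) : cdot v w = (v^T *m cconj w) 0 0.
  by rewrite mxE; apply: eq_bigr => t _; rewrite !mxE.
by rewrite cdotE conjK mulmxA.
Qed.

Lemma eigvec_conj_orthogonal (D M : 'M[C]_N) (a b : C) (x y : 'cV[C]_N) :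
  D^T = D -> D *m map_mx Num.conj D = 1%:M -> M^T = M ->
  D *m M *m x = a *: x -> D *m M *m y = b *: y -> a != b ->
  cdot x (D *m cconj y) = 0.
Proof.
move=> DT D_unitary MT Mx My ab; rewrite cdot_conj_mulmx.
set Dc := map_mx Num.conj D; set B := x^T *m Dc *m y.
have DcD : Dc *m D = 1%:M := mulmx1C D_unitary.
have Bb : b *: B = x^T *m M *m y.
  by rewrite /B scalemxAr -My !mulmxA -[x^T *m Dc *m D]mulmxA DcD mulmx1.
have Ba : a *: B = x^T *m M *m y.
  have trZ : (a *: x)^T = a *: x^T by rewrite linearZ.
  rewrite /B !scalemxAl -trZ -Mx !trmx_mul MT DT.
  by rewrite -!mulmxA [D *m (Dc *m y)]mulmxA D_unitary mul1mx.
have : (a - b) *: B = 0 by rewrite scalerBl Ba Bb subrr.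
by move/eqP; rewrite scaler_eq0 subr_eq0 (negbTE ab) /= => /eqP ->; rewrite mxE.
Qed.

End Conjugate.

Section Model.
Variable R : realType.

Lemma normc_cexp (x : R) : normc (cexp x) = 1.
Proof. by rewrite /= cos2Dsin2 sqrtr1. Qed.

Lemma cexp_conj (x : R) : cexp x * (cexp x)^* = 1.
Proof.
rewrite /cexp /=; apply/eqP; rewrite eq_complex /=; apply/andP; split; apply/eqP.
  by have := cos2Dsin2 x; rewrite !expr2 => <-; ring.
by ring.
Qed.

Lemma Dmat_diag N S (L : 'I_S -> nat) k (beta : 'I_S -> R) (bl : 'I_N -> 'I_S) :
  (forall s (i : 'I_N), inblock L s i = (s == bl i)) ->
  Dmat N L k beta = diag_mx (\row_i cexp (- (2 * pi * k%:R * beta (bl i)))).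
Proof.
move=> blP; apply/matrixP => i j; rewrite !mxE.
case: eqP => [<-|_]; last by rewrite mulr0n.
by rewrite mulr1n (big_pred1 (bl i)) // => s; rewrite blP.
Qed.

Lemma Dmat_unitary N S (L : 'I_S -> nat) k (beta : 'I_S -> R) : bandwidth N L ->
  Dmat N L k beta *m map_mx Num.conj (Dmat N L k beta) = 1%:M.
Proof.
move=> hL; have [bl blP] := block_index hL.
rewrite (Dmat_diag _ _ blP) map_diag_mx mul_diag_mx; apply/matrixP => i j.
by rewrite !mxE; case: eqP => [->|]; rewrite ?mulr1n ?mulr0n ?mulr0 ?cexp_conj.
Qed.

Lemma Dmat_tr N S (L : 'I_S -> nat) k (beta : 'I_S -> R) :
  (Dmat N L k beta)^T = Dmat N L k beta.
Proof. by apply/matrixP => i j; rewrite !mxE eq_sym; case: eqP => [->|]. Qed.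

Lemma WepsE N (W : 'M[R]_N) eps :
  Weps W eps = 1%:M + (eps%:C)%C *: map_mx (real_complex R) W.
Proof.
by rewrite /Weps -[map_mx _ _]/(map_mx (real_complex R) _) map_mxD map_mx1 map_mxZ.
Qed.

Lemma Weps_tr N (W : 'M[R]_N) eps : W^T = W -> (Weps W eps)^T = Weps W eps.
Proof. by move=> WT; rewrite /Weps map_trmx linearD /= trmx1 linearZ /= WT. Qed.

Lemma DmatWeps_lines N S (L : 'I_S -> nat) (W : 'M[R]_N) k (beta : 'I_S -> R) :
  bandwidth N L -> admissible L W -> Gamma beta ->
  eigenspaces_are_lines (fun eps => Dmat N L k beta *m Weps W eps).
Proof.
move=> hL [_ _ _ W_eig Wsub_eig] hbeta; have [bl blP] := block_index hL.
pose dv s := cexp (- (2 * pi * k%:R * beta s)).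
suff [eps0 eps0_gt0 lines] :
    eigenspaces_are_lines (Peps (fun i => dv (bl i)) (map_mx (real_complex R) W)).
  by exists eps0 => // eps eps_range; rewrite (Dmat_diag _ _ blP) WepsE; exact: lines.
have dv_unit s : normc (dv s) = 1 by exact: normc_cexp.
have [k0|k_neq0] := eqVneq k 0%N.
  (* For k = 0 all bands carry the same phase, so W is treated as a single block. *)
  by apply: Peps_lines_const => // i j; rewrite /dv k0 mulr0 !mul0r.
apply: Peps_lines_band hL blP dv_unit _ Wsub_eig => s1 s2 /eqP; apply: contraTeq.
by apply: (hbeta k%:Z); rewrite eqz_nat.
Qed.

End Model.

Theorem lemma4p3 (R : realType) (N S : nat) (L : 'I_S -> nat) (Wdot : 'M[R]_N)
  (k : nat) (beta : 'I_S -> R)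
  (hS : (1 < S)%N) (hSN : (S <= N)%N)
  (hL : bandwidth N L) (hW : admissible L Wdot) (hbeta : Gamma beta)
  (f : R -> 'I_N -> 'cV[complex R]_N)
  (hf : exists2 eps1 : R, 0 < eps1 & forall eps : R, 0 < eps < eps1 ->
          unit_eigenbasis (Dmat N L k beta *m Weps Wdot eps) (f eps)) :
  forall l m : 'I_N, l != m ->
    exists2 eps0 : R, 0 < eps0 & forall eps : R, 0 < eps < eps0 ->
      cdot (f eps l) (Dmat N L k beta *m cconj (f eps m)) = 0.
Proof.
move=> l m lm; have [eps0 eps0_gt0 lines] := DmatWeps_lines k hL hW hbeta.
have [eps1 eps1_gt0 basis] := hf; have [WT _ _ _ _] := hW.
exists (Num.min eps0 eps1) => [|eps]; first by rewrite lt_min eps0_gt0.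
move=> /andP[eps_gt0]; rewrite lt_min => /andP[eps_lt0 eps_lt1].
have eps_in1 : 0 < eps < eps1 by rewrite eps_gt0.
have [f_eig _ f_unit] := basis eps eps_in1.
have /fin_all_exists [lam f_lam] := f_eig.
have lam_inj : injective lam.
  by apply: eigenbasis_eigval_inj f_unit f_lam _; apply: lines; rewrite eps_gt0.
apply: (eigvec_conj_orthogonal (Dmat_tr _ _ _ _) (Dmat_unitary k beta hL) (Weps_tr eps WT)
  (f_lam l) (f_lam m)).
by rewrite (inj_eq lam_inj).
Qed.
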